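(* Let $A\in\mathbb R^{n\times n}$ and, for $W\succ0$, define $$v^*(A,W)=\inf_{P,\Pi}\ \tfrac12\log\det\Pi^{-1}+\tfrac12\log\det W\quad\text{s.t.}\quad\Pi\succ0,\ P\preceq APA^\top+W,\ \begin{bmatrix}P-\Pi & PA^\top\\ AP & APA^\top+W\end{bmatrix}\succeq0,$$ over symmetric $n\times n$ matrices $P,\Pi$. If $0\prec W_1\preceq W_2$, then $v^*(A,W_1)\le v^*(A,W_2)$.
   Context: Logarithms are base 2. *)

From HB Require Import structures.
From mathcomp Require Import all_boot all_order all_algebra.
From mathcomp Require Import all_classical all_reals all_analysis.
Set Implicit Arguments. Unset Strict Implicit. Unset Printing Implicit Defensive.
Import Order.TTheory GRing.Theory Num.Theory.
Local Open Scope ring_scope.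
Local Open Scope classical_set_scope.

(* Base-2 logarithm (the paper's convention). *)
Definition log2 {R : realType} (x : R) : R := ln x / ln 2.

Definition psdmx {R : realType} (n : nat) (M : 'M[R]_n) : Prop :=
  M^T = M /\ forall x : 'cV[R]_n, 0 <= (x^T *m M *m x) 0 0.

Definition pdmx {R : realType} (n : nat) (M : 'M[R]_n) : Prop :=
  M^T = M /\ forall x : 'cV[R]_n, x != 0 -> 0 < (x^T *m M *m x) 0 0.

Definition lemx {R : realType} (n : nat) (M N : 'M[R]_n) : Prop :=
  psdmx (N - M).

Definition vfeasible {R : realType} (n : nat) (A W P Pi : 'M[R]_n) : Prop :=
  [/\ P^T = P, Pi^T = Pi, pdmx Pi,
      lemx P (A *m P *m A^T + W) &
      psdmx (block_mx (P - Pi) (P *m A^T) (A *m P) (A *m P *m A^T + W))].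

Definition vobj {R : realType} (n : nat) (W Pi : 'M[R]_n) : R :=
  2^-1 * log2 (\det (invmx Pi)) + 2^-1 * log2 (\det W).

Definition vstar {R : realType} (n : nat) (A W : 'M[R]_n) : \bar R :=
  ereal_inf [set x : \bar R | exists P Pi : 'M[R]_n,
                 vfeasible A W P Pi /\ x = (vobj W Pi)%:E].

(* Write F_W(P) = A P A^T + W and S_W(P) = P - P A^T F_W(P)^-1 A P.  A pair (P, Pi) is
   feasible for W exactly when P <= F_W(P) and Pi <= S_W(P), and then its value is at
   least (1/2) log (det F_W(P) / det P), with equality for Pi = S_W(P) because
   det F_W(P) det S_W(P) = det P det W.  Given P feasible for W2, the Riccati iterates
   X_k = F_W1^k(W1) are feasible for W1 and stay below F_W2^(k+1)(P).  As S_W2 is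
   monotone, the ratio det F_W2(Q) / det Q only decreases along the increasing sequence
   F_W2^k(P), so log det X_k grows at most linearly with slope
   log (det F_W2(P) / det P).  Hence the increments log (det X_(k+1) / det X_k), which
   are the W1-values of the pairs (X_k, S_W1(X_k)), cannot all exceed that slope by a
   fixed epsilon. *)

From HB Require Import structures.
From mathcomp Require Import all_boot all_order all_algebra.
From mathcomp Require Import all_classical all_reals all_analysis.
From mathcomp Require Import ring lra.
Import Order.TTheory GRing.Theory Num.Theory.
Local Open Scope ring_scope.
Set Implicit Arguments. Unset Strict Implicit. Unset Printing Implicit Defensive.

Section QuadraticForm.
Variable R : comUnitRingType.

Definition qform n (M : 'M[R]_n) (x : 'cV[R]_n) : R := (x^T *m M *m x) 0 0.

Lemma qformDl n (M N : 'M[R]_n) x : qform (M + N) x = qform M x + qform N x.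
Proof. by rewrite /qform mulmxDr mulmxDl mxE. Qed.

Lemma qformNl n (M : 'M[R]_n) x : qform (- M) x = - qform M x.
Proof. by rewrite /qform mulmxN mulNmx mxE. Qed.

Lemma qformBl n (M N : 'M[R]_n) x : qform (M - N) x = qform M x - qform N x.
Proof. by rewrite qformDl qformNl. Qed.

Lemma qform0l n (x : 'cV[R]_n) : qform 0 x = 0.
Proof. by rewrite /qform mulmx0 mul0mx mxE. Qed.

Lemma qform0r n (M : 'M[R]_n) : qform M 0 = 0.
Proof. by rewrite /qform mulmx0 mxE. Qed.

Lemma qform_congr n p (B : 'M[R]_(p, n)) (M : 'M[R]_n) x :
  qform (B *m M *m B^T) x = qform M (B^T *m x).
Proof. by rewrite /qform trmx_mul trmxK !mulmxA. Qed.

Lemma addmx00 (U V : 'M[R]_1) : (U + V) 0 0 = U 0 0 + V 0 0.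
Proof. by rewrite mxE. Qed.

Lemma oppmx00 (U : 'M[R]_1) : (- U) 0 0 = - U 0 0.
Proof. by rewrite mxE. Qed.

Lemma qform_block_col0 m k (P : 'M[R]_m) B C (Q : 'M[R]_k) x :
  qform (block_mx P B C Q) (col_mx x 0) = qform P x.
Proof.
by rewrite /qform tr_col_mx mul_row_block mul_row_col trmx0 !mul0mx !addr0 mulmx0 addr0.
Qed.

Lemma qform_block_ul m k (P : 'M[R]_m) (C : 'M[R]_(k, m)) (Q : 'M[R]_k) x y :
  P^T = P -> P \in unitmx ->
  qform (block_mx P C^T C Q) (col_mx x y) =
  qform P (x + invmx P *m C^T *m y) + qform (Q - C *m invmx P *m C^T) y.
Proof.
move=> sP uP; rewrite /qform.
have PK p (z : 'M[R]_(p, m)) : z *m P *m invmx P = z by rewrite -mulmxA mulmxV ?mulmx1.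
have PKV p (z : 'M[R]_(p, m)) : z *m invmx P *m P = z by rewrite -mulmxA mulVmx ?mulmx1.
have trPC : (invmx P *m C^T)^T = C *m invmx P by rewrite trmx_mul trmxK trmx_inv sP.
rewrite tr_col_mx mul_row_block mul_row_col [(x + _)^T]raddfD /= trmx_mul trPC.
rewrite !mulmxDl !mulmxDr !mulmxA !PK !PKV ?mulmxN ?mulNmx ?mulmxA mulmxBl.
by rewrite !addmx00 ?oppmx00; ring.
Qed.

Lemma qform_block_dr m k (P : 'M[R]_m) (C : 'M[R]_(k, m)) (Q : 'M[R]_k) x y :
  Q^T = Q -> Q \in unitmx ->
  qform (block_mx P C^T C Q) (col_mx x y) =
  qform (P - C^T *m invmx Q *m C) x + qform Q (y + invmx Q *m C *m x).
Proof.
move=> sQ uQ; rewrite /qform.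
have QK p (z : 'M[R]_(p, k)) : z *m Q *m invmx Q = z by rewrite -mulmxA mulmxV ?mulmx1.
have QKV p (z : 'M[R]_(p, k)) : z *m invmx Q *m Q = z by rewrite -mulmxA mulVmx ?mulmx1.
have trQC : (invmx Q *m C)^T = C^T *m invmx Q by rewrite trmx_mul trmx_inv sQ.
rewrite tr_col_mx mul_row_block mul_row_col [(y + _)^T]raddfD /= trmx_mul trQC.
rewrite !mulmxDl !mulmxDr !mulmxA !QK !QKV ?mulmxN ?mulNmx ?mulmxA mulmxBl.
by rewrite !addmx00 ?oppmx00; ring.
Qed.

Lemma det_block_ul m k (P : 'M[R]_m) B C (Q : 'M[R]_k) :
  P \in unitmx -> \det (block_mx P B C Q) = \det P * \det (Q - C *m invmx P *m B).
Proof.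
move=> uP.
have -> : block_mx P B C Q =
    block_mx 1%:M 0 (C *m invmx P) 1%:M *m block_mx P B 0 (Q - C *m invmx P *m B).
  by rewrite mulmx_block !mul1mx !mul0mx !addr0 -mulmxA mulVmx // mulmx1 addrC subrK.
by rewrite det_mulmx det_lblock det_ublock !det1 !mul1r.
Qed.

Lemma det_block_dr m k (P : 'M[R]_m) B C (Q : 'M[R]_k) :
  Q \in unitmx -> \det (block_mx P B C Q) = \det (P - B *m invmx Q *m C) * \det Q.
Proof.
move=> uQ.
have -> : block_mx P B C Q =
    block_mx 1%:M (B *m invmx Q) 0 1%:M *m block_mx (P - B *m invmx Q *m C) 0 C Q.
  by rewrite mulmx_block !mul1mx !mul0mx ?add0r ?addr0 subrK -mulmxA mulVmx // mulmx1.
by rewrite det_mulmx det_lblock det_ublock !det1 !mul1r.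
Qed.

End QuadraticForm.

Section PositiveDefinite.
Variable R : realType.

Lemma lemxP n (X Y : 'M[R]_n) : X^T = X -> Y^T = Y ->
  lemx X Y <-> forall x, qform X x <= qform Y x.
Proof.
move=> sX sY; split=> [[_ XY] x | XY].
  by have := XY x; rewrite -/(qform _ x) qformBl subr_ge0.
split; first by rewrite raddfB /= sX sY.
by move=> x; rewrite -/(qform _ x) qformBl subr_ge0.
Qed.

Lemma lemx_sym n (X Y : 'M[R]_n) : X^T = X -> lemx X Y -> Y^T = Y.
Proof.
move=> sX [sXY _]; move: sXY; rewrite raddfB /= sX => /eqP.
by rewrite subr_eq subrK => /eqP.
Qed.

Lemma lemx_refl n (X : 'M[R]_n) : lemx X X.
Proof. by rewrite /lemx subrr; split=> [|x]; rewrite ?trmx0 // -/(qform _ x) qform0l. Qed.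

Lemma lemx_trans n (X Y Z : 'M[R]_n) : X^T = X -> lemx X Y -> lemx Y Z -> lemx X Z.
Proof.
move=> sX XY YZ; have sY := lemx_sym sX XY; have sZ := lemx_sym sY YZ.
apply/lemxP => // x.
exact: le_trans ((lemxP sX sY).1 XY x) ((lemxP sY sZ).1 YZ x).
Qed.

Lemma pdmx_qform_ge0 n (X : 'M[R]_n) x : pdmx X -> 0 <= qform X x.
Proof.
case=> _ pX; have [->|nz] := eqVneq x 0; first by rewrite qform0r.
exact/ltW/pX.
Qed.

Lemma pdmx_lemx n (X Y : 'M[R]_n) : pdmx X -> lemx X Y -> pdmx Y.
Proof.
move=> [sX pX] XY; have sY := lemx_sym sX XY.
split=> // x nx; exact: lt_le_trans (pX x nx) ((lemxP sX sY).1 XY x).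
Qed.

Lemma pdmx_unit n (X : 'M[R]_n) : pdmx X -> X \in unitmx.
Proof.
move=> [_ pX]; rewrite unitmxE unitfE; apply/negP => /det0P [v nv vX].
by move: (pX v^T); rewrite trmx_eq0 trmxK vX mul0mx mxE ltxx => /(_ nv).
Qed.

Lemma sym_block_mx m k (P : 'M[R]_m) C (Q : 'M[R]_k) :
  (block_mx P C^T C Q)^T = block_mx P C^T C Q -> P^T = P /\ Q^T = Q.
Proof. by rewrite tr_block_mx trmxK => /eq_block_mx []. Qed.

Lemma sym_submxK m k (X : 'M[R]_(m + k)) :
  X^T = X -> block_mx (ulsubmx X) (dlsubmx X)^T (dlsubmx X) (drsubmx X) = X.
Proof. by move=> sX; rewrite trmx_dlsub sX submxK. Qed.

Lemma qform_schur m k (P : 'M[R]_m) (C : 'M[R]_(k, m)) Q y :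
  P^T = P -> P \in unitmx ->
  qform (Q - C *m invmx P *m C^T) y =
  qform (block_mx P C^T C Q) (col_mx (- (invmx P *m C^T *m y)) y).
Proof. by move=> sP uP; rewrite qform_block_ul // addNr qform0r add0r. Qed.

Lemma pdmx_block_ul m k (P : 'M[R]_m) C (Q : 'M[R]_k) :
  pdmx (block_mx P C^T C Q) -> pdmx P.
Proof.
move=> [sM pM]; split; first by case: (sym_block_mx sM).
move=> x nx; rewrite -/(qform _ x) -(qform_block_col0 P C^T C Q); apply: pM.
by rewrite col_mx_eq0 negb_and nx.
Qed.

Lemma pdmx_schur m k (P : 'M[R]_m) C (Q : 'M[R]_k) :
  pdmx (block_mx P C^T C Q) -> pdmx (Q - C *m invmx P *m C^T).
Proof.
move=> pM; have [sM pM'] := pM; have [sP sQ] := sym_block_mx sM.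
have uP := pdmx_unit (pdmx_block_ul pM).
split; first by rewrite raddfB /= !trmx_mul trmxK trmx_inv sP sQ mulmxA.
move=> y ny; rewrite -/(qform _ y) qform_schur //; apply: pM'.
by rewrite col_mx_eq0 negb_and ny orbT.
Qed.

Lemma lemx_schur m k (P P' : 'M[R]_m) C C' (Q Q' : 'M[R]_k) :
  pdmx (block_mx P C^T C Q) -> lemx (block_mx P C^T C Q) (block_mx P' C'^T C' Q') ->
  lemx (Q - C *m invmx P *m C^T) (Q' - C' *m invmx P' *m C'^T).
Proof.
move=> pM MM'; have pM' := pdmx_lemx pM MM'.
have MM'q := (lemxP pM.1 pM'.1).1 MM'.
have [sP _] := sym_block_mx pM.1; have [sP' _] := sym_block_mx pM'.1.
have uP := pdmx_unit (pdmx_block_ul pM); have uP' := pdmx_unit (pdmx_block_ul pM').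
apply/lemxP; [exact: (pdmx_schur pM).1 | exact: (pdmx_schur pM').1 | move=> y].
rewrite [qform (Q' - _) y]qform_schur //; apply: le_trans (MM'q _).
rewrite qform_block_ul // lerDr.
exact: pdmx_qform_ge0 (pdmx_block_ul pM).
Qed.

Lemma qform_mx11 (a : 'M[R]_1) : qform a 1%:M = a 0 0.
Proof. by rewrite /qform trmx1 mul1mx mulmx1. Qed.

Lemma det_pdmx_gt0 n (X : 'M[R]_n) : pdmx X -> 0 < \det X.
Proof.
elim: n X => [|n IH] X pX; first by rewrite det_mx00.
move: X pX; change (forall X : 'M[R]_(1 + n), pdmx X -> 0 < \det X) => X pX.
have sX := pX.1; rewrite -(sym_submxK sX) in pX *.
have ua := pdmx_unit (pdmx_block_ul pX).
rewrite det_block_ul // det_mx11 mulr_gt0 //; last exact/IH/(pdmx_schur pX).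
by rewrite -qform_mx11; apply: (pdmx_block_ul pX).2; rewrite oner_eq0.
Qed.

Lemma det_lemx n (X Y : 'M[R]_n) : pdmx X -> lemx X Y -> \det X <= \det Y.
Proof.
elim: n X Y => [|n IH] X Y pX XY; first by rewrite !det_mx00.
have pY := pdmx_lemx pX XY.
move: X Y pX pY XY.
change (forall X Y : 'M[R]_(1 + n), pdmx X -> pdmx Y -> lemx X Y -> \det X <= \det Y).
move=> X Y pX pY XY; have sX := pX.1; have sY := pY.1.
rewrite -(sym_submxK sX) -(sym_submxK sY) in pX pY XY *.
have ua := pdmx_unit (pdmx_block_ul pX); have ua' := pdmx_unit (pdmx_block_ul pY).
rewrite !det_block_ul // !det_mx11.
apply: ler_pM.
- by rewrite -qform_mx11; apply/ltW/(pdmx_block_ul pX).2; rewrite oner_eq0.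
- exact/ltW/det_pdmx_gt0/(pdmx_schur pX).
- have := (lemxP pX.1 pY.1).1 XY (col_mx 1%:M 0).
  by rewrite !qform_block_col0 !qform_mx11.
- exact: IH (pdmx_schur pX) (lemx_schur pX XY).
Qed.

End PositiveDefinite.

Section Riccati.
Variables (R : realType) (n : nat) (A W : 'M[R]_n).
Hypothesis pW : pdmx W.

Definition predmx (X : 'M[R]_n) := A *m X *m A^T + W.

Definition postmx (X : 'M[R]_n) := X - (A *m X)^T *m invmx (predmx X) *m (A *m X).

(* The covariance of [(x, A x + w)] for independent [x ~ X] and [w ~ W]: [predmx X] is
   its lower-right block and [postmx X] the Schur complement of that block, i.e. the
   prediction and update steps of the Kalman filter. *)
Definition jointmx (X : 'M[R]_n) := block_mx X (A *m X)^T (A *m X) (predmx X).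

Lemma predmx_sym X : X^T = X -> (predmx X)^T = predmx X.
Proof. by move=> sX; rewrite /predmx raddfD /= !trmx_mul trmxK sX pW.1 mulmxA. Qed.

Lemma qform_predmx X x : qform (predmx X) x = qform X (A^T *m x) + qform W x.
Proof. by rewrite /predmx qformDl qform_congr. Qed.

Lemma pdmx_predmx X : pdmx X -> pdmx (predmx X).
Proof.
move=> pX; split=> [|x nx]; first exact: predmx_sym pX.1.
rewrite -/(qform _ x) qform_predmx ltr_wpDl ?pdmx_qform_ge0 //; exact: pW.2.
Qed.

Lemma lemx_predmx X Y : X^T = X -> lemx X Y -> lemx (predmx X) (predmx Y).
Proof.
move=> sX XY; have sY := lemx_sym sX XY.
apply/lemxP; rewrite ?predmx_sym // => x.
by rewrite !qform_predmx lerD2r (lemxP sX sY).1.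
Qed.

Lemma qform_jointmx X x y : pdmx X ->
  qform (jointmx X) (col_mx x y) = qform X (x + A^T *m y) + qform W y.
Proof.
move=> [sX pX]; have uX := pdmx_unit (conj sX pX).
rewrite /jointmx qform_block_ul //.
have -> : invmx X *m (A *m X)^T = A^T by rewrite trmx_mul sX mulmxA mulVmx ?mul1mx.
rewrite trmx_mul sX -mulmxA (mulmxA (invmx X)) mulVmx // mul1mx.
by rewrite /predmx addrAC subrr add0r.
Qed.

Lemma qform_jointmx_postmx X x y : pdmx X ->
  qform (jointmx X) (col_mx x y) =
  qform (postmx X) x + qform (predmx X) (y + invmx (predmx X) *m (A *m X) *m x).
Proof.
move=> pX; have pF := pdmx_predmx pX.
by rewrite /jointmx qform_block_dr ?pF.1 ?pdmx_unit.
Qed.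

Lemma qform_postmx_le X x y : pdmx X ->
  qform (postmx X) x <= qform X (x + A^T *m y) + qform W y.
Proof.
move=> pX; rewrite -qform_jointmx // qform_jointmx_postmx // lerDl.
exact/pdmx_qform_ge0/pdmx_predmx.
Qed.

Lemma qform_postmx X x : pdmx X -> qform (postmx X) x =
  qform (jointmx X) (col_mx x (- (invmx (predmx X) *m (A *m X) *m x))).
Proof. by move=> pX; rewrite qform_jointmx_postmx // addNr qform0r addr0. Qed.

Lemma postmx_sym X : pdmx X -> (postmx X)^T = postmx X.
Proof.
move=> pX; have [sX _] := pX.
by rewrite /postmx raddfB /= !trmx_mul trmxK trmx_inv (pdmx_predmx pX).1 !sX mulmxA.
Qed.

Lemma pdmx_postmx X : pdmx X -> pdmx (postmx X).
Proof.
move=> pX; split=> [|x nx]; first exact: postmx_sym.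
rewrite -/(qform _ x) qform_postmx // qform_jointmx //.
set y := - _; have [->|ny] := eqVneq y 0.
  by rewrite mulmx0 addr0 qform0r addr0; exact: pX.2.
by rewrite ltr_wpDl ?pdmx_qform_ge0 //; exact: pW.2.
Qed.

Lemma lemx_postmx X Y : pdmx X -> lemx X Y -> lemx (postmx X) (postmx Y).
Proof.
move=> pX XY; have pY := pdmx_lemx pX XY.
apply/lemxP; rewrite ?postmx_sym // => x.
rewrite [qform (postmx Y) x]qform_postmx // qform_jointmx //; set y := - _.
apply: le_trans (qform_postmx_le x y pX) _.
by rewrite lerD2r (lemxP pX.1 pY.1).1.
Qed.

Lemma det_postmx X : pdmx X -> \det (predmx X) * \det (postmx X) = \det X * \det W.
Proof.
move=> pX; have uX := pdmx_unit pX; have uF := pdmx_unit (pdmx_predmx pX).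
have := det_block_ul (A *m X)^T (A *m X) (predmx X) uX.
rewrite det_block_dr // mulrC => ->.
rewrite trmx_mul pX.1 -mulmxA (mulmxA (invmx X)) mulVmx // mul1mx.
by rewrite /predmx addrAC subrr add0r.
Qed.

Lemma vfeasible_postmx X : pdmx X -> lemx X (predmx X) -> vfeasible A W X (postmx X).
Proof.
move=> pX XF; have pF := pdmx_predmx pX; have pS := pdmx_postmx pX.
split=> //; [exact: pX.1 | exact: pS.1 |].
have -> : X *m A^T = (A *m X)^T by rewrite trmx_mul pX.1.
rewrite -/(predmx X); split.
  by rewrite tr_block_mx trmxK raddfB /= pX.1 pS.1 pF.1.
move=> v; rewrite -/(qform _ v) -[v]vsubmxK qform_block_dr ?pF.1 ?pdmx_unit //.
have -> : X - postmx X - (A *m X)^T *m invmx (predmx X) *m (A *m X) = 0.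
  by apply/eqP; rewrite subr_eq0 /postmx opprB addrC subrK.
by rewrite qform0l add0r pdmx_qform_ge0.
Qed.

Lemma vfeasible_lemx_postmx P Pi : vfeasible A W P Pi -> pdmx P /\ lemx Pi (postmx P).
Proof.
case=> sP sPi pPi _ [_ pM].
have P_Pi x : 0 <= qform (P - Pi) x.
  by rewrite -(qform_block_col0 _ (P *m A^T) (A *m P) (A *m P *m A^T + W)); exact: pM.
have pP : pdmx P.
  split=> // x nx; have := P_Pi x; rewrite qformBl subr_ge0.
  exact: lt_le_trans (pPi.2 x nx).
have pF := pdmx_predmx pP.
split=> //; apply/lemxP; rewrite ?postmx_sym // => x.
have := pM (col_mx x (- (invmx (predmx P) *m (A *m P) *m x))).
have -> : P *m A^T = (A *m P)^T by rewrite trmx_mul sP.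
rewrite -/(qform _ _) -/(predmx P) qform_block_dr ?pF.1 ?pdmx_unit //.
by rewrite addNr qform0r addr0 addrAC -/(postmx P) qformBl subr_ge0.
Qed.

End Riccati.

Lemma ln_det_le (R : realType) n (X Y : 'M[R]_n) :
  pdmx X -> lemx X Y -> ln (\det X) <= ln (\det Y).
Proof.
move=> pX XY; rewrite ler_ln ?posrE ?det_lemx ?det_pdmx_gt0 //.
exact: pdmx_lemx pX XY.
Qed.

Section RiccatiIteration.
Variables (R : realType) (n : nat) (A W : 'M[R]_n).
Hypothesis pW : pdmx W.
Local Notation F := (predmx A W).

Lemma ln_det_predmx X : pdmx X ->
  ln (\det (F X)) - ln (\det X) = ln (\det W) - ln (\det (postmx A W X)).
Proof.
move=> pX; have := congr1 (@ln R) (det_postmx A pW pX).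
have dF := det_pdmx_gt0 (pdmx_predmx A pW pX).
have dS := det_pdmx_gt0 (pdmx_postmx A pW pX).
have dX := det_pdmx_gt0 pX; have dW := det_pdmx_gt0 pW.
by rewrite !lnM ?posrE // => h; lra.
Qed.

Lemma pdmx_iter_predmx X k : pdmx X -> pdmx (iter k F X).
Proof. by move=> pX; elim: k => //= k; exact: pdmx_predmx. Qed.

Lemma lemx_iter_predmx X k : pdmx X -> lemx X (F X) -> lemx (iter k F X) (iter k.+1 F X).
Proof.
move=> pX XF; elim: k => //= k IH.
exact: lemx_predmx (pdmx_iter_predmx k pX).1 IH.
Qed.

Lemma lemx_iter_predmx_ge X k : pdmx X -> lemx X (F X) -> lemx X (iter k F X).
Proof.
move=> pX XF; elim: k => [|k IH]; first exact: lemx_refl.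
exact: lemx_trans pX.1 IH (lemx_iter_predmx k pX XF).
Qed.

(* The log-determinant grows by at most the increment at the starting point, since
   [postmx] is monotone. *)
Lemma ln_det_iter_predmx_le X k : pdmx X -> lemx X (F X) ->
  ln (\det (iter k F X)) <= ln (\det X) + k%:R * (ln (\det W) - ln (\det (postmx A W X))).
Proof.
move=> pX XF; elim: k => [|k IH]; first by rewrite mul0r addr0.
have pXk := pdmx_iter_predmx k pX.
have := ln_det_predmx pXk; rewrite /= -/(iter k F X).
have := ln_det_le (pdmx_postmx A pW pX) (lemx_postmx A pW pX (lemx_iter_predmx_ge k pX XF)).
rewrite -natr1; lra.
Qed.

End RiccatiIteration.

Lemma lemx_predmx_noise (R : realType) n (A W1 W2 X : 'M[R]_n) :
  pdmx W1 -> lemx W1 W2 -> X^T = X -> lemx (predmx A W1 X) (predmx A W2 X).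
Proof.
move=> pW1 W12 sX; have pW2 := pdmx_lemx pW1 W12.
apply/lemxP; rewrite ?predmx_sym // => x.
by rewrite !qform_predmx lerD2l (lemxP pW1.1 pW2.1).1.
Qed.

Lemma lemx_iter_predmx_noise (R : realType) n (A W1 W2 P : 'M[R]_n) k :
  pdmx W1 -> lemx W1 W2 -> pdmx P ->
  lemx (iter k (predmx A W1) W1) (iter k.+1 (predmx A W2) P).
Proof.
move=> pW1 W12 pP; have pW2 := pdmx_lemx pW1 W12.
elim: k => [|k IH].
  apply/lemxP; rewrite ?predmx_sym ?pP.1 //= ?pW1.1 // => x.
  rewrite qform_predmx -[qform W1 x]add0r lerD ?pdmx_qform_ge0 //.
  exact: (lemxP pW1.1 pW2.1).1.
have pXk := pdmx_iter_predmx A pW1 k pW1.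
apply: lemx_trans (lemx_predmx A pW1 pXk.1 IH) _.
  exact: (pdmx_predmx A pW1 pXk).1.
exact: lemx_predmx_noise (pdmx_iter_predmx A pW2 k.+1 pP).1.
Qed.

Lemma exists_increment_le (R : archiRealFieldType) (u : nat -> R) (b d e : R) :
  0 < e -> (forall k, u k <= b + k%:R * d) -> exists k, u k.+1 - u k <= d + e.
Proof.
move=> e0 ub; apply/not_existsP => incr.
have lb k : u 0%N + k%:R * (d + e) <= u k.
  elim: k => [|k IH]; first by rewrite mul0r addr0.
  have /negP := incr k; rewrite -ltNge -natr1 => /ltW; lra.
pose k := (Num.Def.truncn ((b - u 0%N) / e)).+1.
have := truncnS_gt ((b - u 0%N) / e); rewrite -/k ltr_pdivrMr // => kl.
have := le_trans (lb k) (ub k); lra.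
Qed.

Lemma vobjE (R : realType) n (W Pi : 'M[R]_n) : pdmx W -> pdmx Pi ->
  vobj W Pi = (ln (\det W) - ln (\det Pi)) / (2 * ln 2).
Proof.
move=> pW pPi; rewrite /vobj /log2 det_inv lnV ?posrE ?det_pdmx_gt0 //.
have : ln (2 : R) != 0 by rewrite gt_eqF // ln_gt0 // ltr1n.
by move=> ?; field.
Qed.

Lemma exists_vfeasible_vobj_le (R : realType) n (A W1 W2 P Pi : 'M[R]_n) (e : R) :
  pdmx W1 -> lemx W1 W2 -> vfeasible A W2 P Pi -> 0 < e ->
  exists P' Pi', vfeasible A W1 P' Pi' /\ vobj W1 Pi' <= vobj W2 Pi + e.
Proof.
move=> pW1 W12 feas e0; have pW2 := pdmx_lemx pW1 W12.
have [pP PiS] := vfeasible_lemx_postmx pW2 feas.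
have [_ _ pPi PF _] := feas.
have W1F : lemx W1 (predmx A W1 W1).
  apply/lemxP; rewrite ?predmx_sym ?pW1.1 // => x.
  by rewrite qform_predmx lerDr pdmx_qform_ge0.
pose X k := iter k (predmx A W1) W1.
pose c := ln (\det W2) - ln (\det (postmx A W2 P)).
have l2 : 0 < ln (2 : R) by rewrite ln_gt0 // ltr1n.
have [k Xk] : exists k, ln (\det (X k.+1)) - ln (\det (X k)) <= c + e * (2 * ln 2).
  apply: (exists_increment_le (b := ln (\det P) + c)); first by rewrite !mulr_gt0.
  move=> k; apply: le_trans (ln_det_le (pdmx_iter_predmx A pW1 k pW1)
    (lemx_iter_predmx_noise A k pW1 W12 pP)) _.
  have := ln_det_iter_predmx_le pW2 k.+1 pP PF; rewrite -natr1 mulrDl mul1r -/c => h; lra.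
have pXk := pdmx_iter_predmx A pW1 k pW1.
exists (X k), (postmx A W1 (X k)); split.
  exact: (vfeasible_postmx pW1 pXk (lemx_iter_predmx pW1 k pW1 W1F)).
rewrite (vobjE pW1 (pdmx_postmx A pW1 pXk)) (vobjE pW2 pPi) -(ln_det_predmx A pW1 pXk).
have := ln_det_le pPi PiS; have l2' : 0 < 2 * ln (2 : R) by rewrite mulr_gt0.
rewrite -[e](mulfK (lt0r_neq0 l2')) -mulrDl ler_pM2r ?invr_gt0 //.
move: Xk; rewrite /X /c /= => h1 h2; lra.
Qed.

Unset Implicit Arguments.

Theorem lemma12 (R : realType) (n : nat) (A W1 W2 : 'M[R]_n) :
  pdmx W1 -> lemx W1 W2 -> (vstar A W1 <= vstar A W2)%E.
Proof.
move=> pW1 W12; apply/ereal_infP => _ [P [Pi [feas ->]]].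
apply/lee_addgt0Pr => e e0.
have [P' [Pi' [feas' le]]] := exists_vfeasible_vobj_le pW1 W12 feas e0.
apply: (@le_trans _ _ (vobj W1 Pi')%:E); first by apply: ereal_inf_lbound; exists P', Pi'.
by rewrite -EFinD lee_fin.
Qed.
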